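(* Let $a\ge 0$ be a real number and let $T$ be a tree on $n$ vertices with degrees $k_1,\dots,k_n$, and set $\langle k^2\rangle=\frac{1}{n}\sum_{i=1}^n k_i^2$ and $E_0[C]=\frac{n}{6}\left(n-1-\langle k^2\rangle\right)$. If $n>3a+3$ and $E_0[C]\le a$, then $T$ is a star tree, i.e. $T$ has a vertex of degree $n-1$.
   Context: $E_0[C]$ equals the expected number of crossings when the vertices of $T$ are placed at positions $1,\dots,n$ by a uniformly random permutation, where two edges $\{s,t\}$, $\{u,v\}$ cross iff exactly one of the positions of $s,t$ lies strictly between the positions of $u$ and $v$ and the other lies strictly outside that interval. *)

From mathcomp Require Import all_boot all_order all_algebra.
From mathcomp Require Import all_reals.
Set Implicit Arguments. Unset Strict Implicit. Unset Printing Implicit Defensive.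
Import Order.TTheory GRing.Theory Num.Theory.

Definition simple_graph (V : finType) (e : rel V) : Prop :=
  symmetric e /\ irreflexive e.

Definition connected_graph (V : finType) (e : rel V) : Prop :=
  forall x y : V, connect e x y.

Definition acyclic_graph (V : finType) (e : rel V) : Prop :=
  forall c : seq V, uniq c -> 2 < size c -> ~~ cycle e c.

Definition is_tree (V : finType) (e : rel V) : Prop :=
  [/\ simple_graph e, connected_graph e & acyclic_graph e].

Definition deg (V : finType) (e : rel V) (x : V) : nat := #|[set y | e x y]|.

Definition mean_sq_deg (R : realType) (V : finType) (e : rel V) : R :=
  (\sum_(x : V) ((deg e x) ^ 2)%:R) / (#|V|)%:R.

Definition E0C (R : realType) (V : finType) (e : rel V) : R :=
  (#|V|)%:R / 6%:R * ((#|V|)%:R - 1 - mean_sq_deg R e).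

(* A tree on n vertices has degree sum 2(n-1) (we only need <=), so E_0[C] is
   (n^2 - n - sum_i k_i^2)/6.  If no vertex has degree n-1, the excess degrees
   c_i = k_i - 1 are at most n-3 and sum to at most n-2; splitting off the
   largest one, sum_i c_i^2 <= (n-3)^2 + 1, the value of the double star.  This
   gives sum_i k_i^2 <= n^2 - 3n + 6, hence E_0[C] >= (n-3)/3 > a. *)
From mathcomp Require Import all_boot all_order all_algebra.
From mathcomp Require Import all_reals.
From mathcomp Require Import zify ring lra.
Import Order.TTheory GRing.Theory Num.Theory.
Set Implicit Arguments. Unset Strict Implicit.

Lemma card_set_predE (V : finType) (S : {set V}) (P : pred V) :
  #|[set y in S | P y]| = \sum_(y in S) (P y : nat).
Proof.
rewrite -sum1_card big_mkcond [RHS]big_mkcond; apply: eq_bigr => y _.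
by rewrite !inE; case: (y \in S); case: (P y).
Qed.

Section Forest.
Variables (V : finType) (e : rel V).
Hypotheses (e_sym : symmetric e) (e_irr : irreflexive e) (e_acyc : acyclic_graph e).

(* A vertex [z] of [S] adjacent to the head [y] of a simple path, other than its
   successor, cannot lie on the path, since it would close a cycle. *)
Lemma leaf_or_path_extension (S : {set V}) (y : V) (q : seq V) :
  uniq (y :: q) -> {subset y :: q <= S} -> path e y q ->
  #|[set z in S | e y z]| <= 1 \/
  exists z, [/\ uniq (z :: y :: q), {subset z :: y :: q <= S} & path e z (y :: q)].
Proof.
move=> yq_uniq yq_sub yq_path.
have [|nbrs_gt1] := leqP #|[set z in S | e y z]| 1; [by left | right].
have : 0 < #|[set z in S | e y z] :\ head y q|.
  by move: nbrs_gt1; rewrite (cardsD1 (head y q)); case: (_ \in _) => /=; lia.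
rewrite card_gt0 => /set0Pn [z]; rewrite !inE => /and3P [z_nhead zS eyz].
exists z; have zy : z != y by apply: contraTneq eyz => ->; rewrite e_irr.
have z_notin_q : z \notin q.
  apply/negP; case: q yq_uniq yq_sub yq_path z_nhead => [//|w q] + _ + /= zw zq.
  rewrite inE (negbTE zw) /= in zq.
  case/splitPr: zq => q1 q2; rewrite -cat_rcons -!cat_cons cat_uniq cat_path.
  move=> /andP [cyc_uniq _] /andP [cyc_path _].
  have cyc_size : 2 < size (y :: w :: rcons q1 z) by rewrite /= size_rcons.
  move/negP: (e_acyc cyc_uniq cyc_size); apply.
  by rewrite /cycle rcons_path cyc_path /= last_rcons e_sym.
split.
- by rewrite cons_uniq in_cons negb_or zy z_notin_q yq_uniq.
- by move=> u; rewrite inE => /predU1P [->|/yq_sub].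
- by rewrite /= e_sym eyz yq_path.
Qed.

Lemma exists_leaf (S : {set V}) (x0 : V) :
  x0 \in S -> exists2 x, x \in S & #|[set z in S | e x z]| <= 1.
Proof.
move=> x0S.
suff grow : forall m y q, #|S| - size (y :: q) <= m ->
    uniq (y :: q) -> {subset y :: q <= S} -> path e y q ->
    exists2 x, x \in S & #|[set z in S | e x z]| <= 1.
  by apply: (grow #|S| x0 [::]) => //; [lia | move=> u; rewrite inE => /eqP ->].
elim=> [|m IHm] y q m_bound yq_uniq yq_sub yq_path;
  have [leaf|[z [zyq_uniq zyq_sub zyq_path]]] :=
    leaf_or_path_extension yq_uniq yq_sub yq_path;
  try by exists y => //; apply: yq_sub; rewrite inE eqxx.
- have : size (z :: y :: q) <= #|S|.
    by rewrite cardE; apply: uniq_leq_size => // u /zyq_sub; rewrite mem_enum.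
  by move: m_bound => /=; lia.
- by apply: (IHm z (y :: q)) => //; move: m_bound => /=; lia.
Qed.

Definition adj_pairs (S : {set V}) : nat := \sum_(x in S) \sum_(y in S) (e x y : nat).

Lemma adj_pairsD1 (S : {set V}) (x : V) : x \in S ->
  adj_pairs S = adj_pairs (S :\ x) + 2 * \sum_(y in S :\ x) (e x y : nat).
Proof.
move=> xS; rewrite /adj_pairs (bigD1 x xS) /= (bigD1 x xS) /= e_irr add0n.
have sumD1 (F : V -> nat) : \sum_(y in S | y != x) F y = \sum_(y in S :\ x) F y.
  by apply: eq_bigl => y; rewrite !inE andbC.
rewrite !sumD1 [X in _ + X](eq_bigr (fun z =>
    (e z x : nat) + \sum_(y in S :\ x) (e z y : nat)));
  last by move=> z _; rewrite (bigD1 x xS) sumD1.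
have col_row : \sum_(z in S :\ x) (e z x : nat) = \sum_(y in S :\ x) (e x y : nat).
  by apply: eq_bigr => z _; rewrite e_sym.
rewrite big_split /= col_row; lia.
Qed.

Lemma adj_pairs_le (S : {set V}) : adj_pairs S <= 2 * (#|S| - 1).
Proof.
move: {2}#|S| (leqnn #|S|) => k; elim: k S => [|k IHk] S S_size.
  by move: S_size; rewrite leqn0 cards_eq0 => /eqP ->; rewrite /adj_pairs big_set0.
have [->|[x0 x0S]] := set_0Vmem S; first by rewrite /adj_pairs big_set0.
have [x xS leaf] := exists_leaf x0S.
have SDx_size : #|S :\ x| <= k by move: S_size; rewrite (cardsD1 x S) xS; lia.
have x_nbrs : \sum_(y in S :\ x) (e x y : nat) <= 1.
  apply: leq_trans leaf; rewrite card_set_predE (bigD1 x xS) /= e_irr add0n.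
  by apply: eq_leq; apply: eq_bigl => y; rewrite !inE andbC.
have x_nbrs_size : \sum_(y in S :\ x) (e x y : nat) <= #|S :\ x|.
  by rewrite -sum1_card; apply: leq_sum => y _; case: (e x y).
have := IHk _ SDx_size; have := cardsD1 x S; rewrite (adj_pairsD1 xS) xS; lia.
Qed.

End Forest.

Lemma deg_sum (V : finType) (e : rel V) (x : V) : deg e x = \sum_y (e x y : nat).
Proof.
rewrite /deg -sum1_card big_mkcond; apply: eq_bigr => y _.
by rewrite inE; case: (e x y).
Qed.

Lemma deg_le (V : finType) (e : rel V) (x : V) : irreflexive e -> deg e x <= #|V| - 1.
Proof.
move=> e_irr; rewrite /deg subn1 -(cardsC1 x); apply/subset_leq_card/subsetP => y.
by rewrite !inE; apply: contraTneq => ->; rewrite e_irr.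
Qed.

Lemma connected_deg_gt0 (V : finType) (e : rel V) (x : V) :
  connected_graph e -> 2 <= #|V| -> 0 < deg e x.
Proof.
move=> conn V_size; have : 0 < #|[set~ x]| by rewrite cardsC1; lia.
rewrite card_gt0 => /set0Pn [z]; rewrite !inE => zx.
case/connectP: (conn x z) => [[|w p]] /= => [_ zE|/andP [exw _] _].
  by rewrite zE eqxx in zx.
by rewrite /deg card_gt0; apply/set0Pn; exists w; rewrite inE.
Qed.

Lemma tree_sum_deg_le (V : finType) (e : rel V) :
  is_tree e -> \sum_x deg e x <= 2 * (#|V| - 1).
Proof.
case=> [[e_sym e_irr] _ e_acyc]; rewrite -cardsT.
apply: leq_trans (adj_pairs_le e_sym e_irr e_acyc setT); apply: eq_leq.
rewrite /adj_pairs; apply: eq_big => [x|x _]; first by rewrite inE.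
by rewrite deg_sum; apply: eq_bigl => y; rewrite inE.
Qed.

Lemma sum_sq_le (I : finType) (P : pred I) (c : I -> nat) (b : nat) :
  (forall i, P i -> c i <= b) -> \sum_(i | P i) c i ^ 2 <= b * \sum_(i | P i) c i.
Proof.
move=> c_le; rewrite big_distrr; apply: leq_sum => i Pi.
by rewrite expnSr expn1 leq_mul2r c_le ?orbT.
Qed.

(* [(n-3)^2 + 1] is attained by the double star with degrees [n-2, 2, 1, ..., 1]. *)
Lemma sum_sq_le_double_star (I : finType) (c : I -> nat) (x : I) (n : nat) :
  (forall i, c i <= c x) -> c x <= n - 3 -> \sum_i c i <= n - 2 ->
  \sum_i c i ^ 2 <= (n - 3) ^ 2 + 1.
Proof.
move=> c_max cx_le; rewrite (bigD1 x) //= => sum_le; rewrite (bigD1 x) //=.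
set t := \sum_(i | i != x) c i in sum_le *.
have : \sum_(i | i != x) c i ^ 2 <= minn (c x) t * t.
  apply: sum_sq_le => i ix; rewrite leq_min c_max.
  by rewrite /t (bigD1 i) //= leq_addr.
by case: leqP; nia.
Qed.

Lemma nonstar_tree_sum_sq_deg (V : finType) (e : rel V) :
  is_tree e -> 2 <= #|V| -> (forall x, deg e x != (#|V|).-1) ->
  \sum_x deg e x ^ 2 + 3 * #|V| <= #|V| ^ 2 + 6.
Proof.
move=> tree V_size nonstar; have [[_ e_irr] conn _] := tree.
have deg_gt0 x : 0 < deg e x := connected_deg_gt0 x conn V_size.
have /card_gt0P [x0 _] : 0 < #|V| by lia.
have [x _ x_max] := @arg_maxnP V x0 predT (deg e) isT.
set c := fun y => deg e y - 1.
have sum_deg : \sum_y deg e y = \sum_y c y + #|V|.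
  rewrite -sum1_card -big_split /=; apply: eq_bigr => y _.
  by have := deg_gt0 y; rewrite /c; lia.
have sum_sq_deg : \sum_y deg e y ^ 2 = \sum_y c y ^ 2 + 2 * \sum_y c y + #|V|.
  rewrite big_distrr -sum1_card -!big_split; apply: eq_bigr => y _ /=.
  by have := deg_gt0 y; rewrite /c; nia.
have c_max y : c y <= c x by apply: leq_sub2r; apply: x_max.
have cx_le : c x <= #|V| - 3.
  by have := deg_le x e_irr; have := nonstar x; rewrite /c; lia.
have sum_c_le : \sum_y c y <= #|V| - 2.
  by have := tree_sum_deg_le tree; rewrite sum_deg; lia.
have := sum_sq_le_double_star c_max cx_le sum_c_le.
rewrite sum_sq_deg -!mulnn; nia.
Qed.

Local Open Scope ring_scope.
Unset Implicit Arguments.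

Theorem mainTheorem2 (R : realType) (a : R) (V : finType) (e : rel V) :
  0 <= a ->
  is_tree e ->
  3 * a + 3 < (#|V|)%:R ->
  E0C R e <= a ->
  exists x : V, deg e x = (#|V|).-1.
Proof.
move=> a_ge0 tree V_size E0C_le.
have V_ge4 : (4 <= #|V|)%N by rewrite -(ltr_nat R); lra.
have [x /eqP star|nonstar] := pickP (fun x => deg e x == (#|V|).-1); first by exists x.
have := nonstar_tree_sum_sq_deg tree (ltnW (ltnW V_ge4)).
move=> /(_ (fun x => negbT (nonstar x))); rewrite -(ler_nat R) !natrD !natrM.
move: E0C_le V_size; rewrite /E0C /mean_sq_deg -natr_sum.
set n := (#|V|)%:R; set s := (\sum_x _ ^ 2)%:R.
have n_neq0 : n != 0 by rewrite pnatr_eq0; lia.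
have -> : n / 6%:R * (n - 1 - s / n) = (n * n - n - s) / 6 by field.
lra.
Qed.
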